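(* Let $M=(\Gamma,\Sigma,P,\delta)$ be a linear bounded deterministic Turing machine, let $x\in\Sigma^*$ be an input with $|x|=n\geq 1$, and let $Sys_M$ be the interaction system associated with $M$ and $x$ as defined in the context. Then $M$ accepts $x$ (i.e. $M$ started on $x$ halts in state $p^Y$) if and only if some global state $q=(q_0,\dots,q_{n+1})$ of $Sys_M$ is reachable such that $q_i=(p^Y,\gamma)$ for some $i\in\{0,\dots,n+1\}$ and some $\gamma\in\Gamma$.
   Context: Interaction systems. Let $K=\{1,\dots,n\}$ (or any finite index set) be a set of components and $\{A_i\}_{i\in K}$ a family of pairwise disjoint finite sets of ports. An interaction is a nonempty set $\alpha\subseteq\bigcup_{i\in K}A_i$ with $|\alpha\cap A_i|\le 1$ for all $i$. An interaction set $Int$ is a set of interactions such that every port occurs in at least one interaction; $IM=(K,\{A_i\}_{i\in K},Int)$ is an interaction model. An interaction system is $Sys=(IM,\{T_i\}_{i\in K})$ where $T_i=(Q_i,A_i,\to_i,q_i^0)$ is a labeled transition system with finite state set $Q_i$, transition relation $\to_i\subseteq Q_i\times A_i\times Q_i$ and initial state $q_i^0$. Its global behavior is the transition system with states $Q=\prod_{i\in K}Q_i$, initial state $q^0=(q_i^0)_{i\in K}$, and $q\xrightarrow{\alpha}q'$ (for $\alpha\in Int$) iff for all $i\in K$: if $\alpha\cap A_i=\{a_i\}$ then $(q_i,a_i,q_i')\in\to_i$, and if $\alpha\cap A_i=\emptyset$ then $q_i=q_i'$. A global state is reachable if there is a path from $q^0$ to it in the global behavior. Turing machines. A DTM is $M=(\Gamma,\Sigma,P,\delta)$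 with finite tape alphabet $\Gamma$, input alphabet $\Sigma\subseteq\Gamma$, blank $b\in\Gamma\setminus\Sigma$, finite state set $P$ containing initial state $p^0$ and halt states $p^Y,p^N$, and $\delta:(P\setminus\{p^Y,p^N\})\times\Gamma\to P\times\Gamma\times\{-1,+1\}$. The tape is two-way infinite with cells indexed by integers; input $x=x^1\cdots x^n$ is written on cells $1,\dots,n$ (all other cells blank), the machine starts in $p^0$ with head on cell $1$. $M$ is linear bounded if no computation on an input of length $n$ uses cells other than $0,\dots,n+1$. Construction of $Sys_M$. Components $K=\{0,\dots,n+1\}$ (one per tape cell). Let $P'=P\setminus\{p^Y,p^N\}$. For $1\le i\le n$: $A_i=\{(p,\gamma)_i^1,(p,\gamma)_i^2 : p\in P',\gamma\in\Gamma\}$. $A_0=\{(p,\gamma)_0^1: p\in P',\gamma\in\Gamma,\ \delta(p,\gamma)\text{ has direction }+1\}\cup\{(p,\gamma)_0^2: p\in P',\gamma\in\Gamma,\ \delta(p,\gamma)\text{ has direction }-1\}$, and $A_{n+1}=\{(p,\gamma)_{n+1}^1: \delta(p,\gamma)\text{ has direction }-1\}\cup\{(p,\gamma)_{n+1}^2: \delta(p,\gamma)\text{ has direction }+1\}$ (with $p\in P',\gamma\in\Gamma$). Interactions: $Int=\{\{(p,\gamma)_i^1,(p,\gamma)_{i+T}^2\} : p\in P',\gamma\in\Gamma,\ \delta(p,\gamma)=(p',\gamma',T),\ 0\le i\le n+1,\ 0\le i+T\le n+1\}$. For each $i$, $Q_i=\{(p,\gamma): p\in P\cup\{s\},\gamma\in\Gamma\}$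 where $s\notin P$ is a fresh symbol ($(s,\gamma)$ means cell content $\gamma$, head elsewhere; $(p,\gamma)$ with $p\in P$ means head on this cell in state $p$ reading $\gamma$). Initial states: $q_0^0=(s,b)$, $q_1^0=(p^0,x^1)$, $q_i^0=(s,x^i)$ for $2\le i\le n$, $q_{n+1}^0=(s,b)$. Transitions $\to_i$ (only for ports belonging to $A_i$): (a) $(p,\gamma)\xrightarrow{(p,\gamma)_i^1}(s,\gamma')$ whenever $p\in P'$ and $\delta(p,\gamma)=(p',\gamma',T)$ for some $p',T$; (b) $(s,\tilde\gamma)\xrightarrow{(p,\gamma)_i^2}(p',\tilde\gamma)$ for all $\tilde\gamma\in\Gamma$ whenever $p\in P'$ and $\delta(p,\gamma)=(p',\gamma',T)$ for some $\gamma',T$. *)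

From HB Require Import structures.
From mathcomp Require Import all_boot all_order all_algebra.
From Stdlib Require Import Relations.
Unset Strict Implicit. Unset Printing Implicit Defensive.
Import Order.TTheory GRing.Theory Num.Theory.

(* Ports form a finite type; each port has an owner component, so the *)
(* families A_i := [pred a | is_port a & owner a == i] are pairwise   *)
(* disjoint by construction.                                          *)
Record InteractionSystem := {
  comp : finType;
  port : finType;
  owner : port -> comp;
  is_port : pred port;
  Int : {set port} -> Prop;
  lstate : comp -> finType;
  ltrans : forall i : comp, lstate i -> port -> lstate i -> bool;
  linit : forall i : comp, lstate i
}.

Definition A (S : InteractionSystem) (i : comp S) : pred (port S) :=
  [pred a | is_port S a && (owner S a == i)].

Definition gstate (S : InteractionSystem) := forall i : comp S, lstate S i.

Definition ginit (S : InteractionSystem) : gstate S := fun i => linit S i.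

Definition gstep (S : InteractionSystem) (alpha : {set port S}) (q q' : gstate S) : Prop :=
  Int S alpha /\
  forall i : comp S,
    (forall a, a \in alpha -> a \in A S i -> ltrans S i (q i) a (q' i)) /\
    ((forall a, a \in alpha -> a \notin A S i) -> q i = q' i).

Definition greach (S : InteractionSystem) : relation (gstate S) :=
  clos_refl_trans_1n _ (fun q q' => exists alpha, gstep S alpha q q').

Definition reachable (S : InteractionSystem) (q : gstate S) : Prop :=
  greach S (ginit S) q.

Variant dir := Lft | Rgt.
Definition isR (d : dir) : bool := if d is Rgt then true else false.
Definition dval (d : dir) : int := if d is Lft then (-1)%R else 1%R.

Record DTM := {
  tsym : finType;
  Sigma : pred tsym;
  blank : tsym;
  blank_notin : ~~ Sigma blank;
  tst : finType;
  p0 : tst; pY : tst; pN : tst;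
  pYN : pY != pN;
  (* delta is only consulted on non-halting states P' = P \ {pY,pN} *)
  delta : tst -> tsym -> tst * tsym * dir
}.

Definition halting (M : DTM) (p : tst M) : bool := (p == pY M) || (p == pN M).

Record config (M : DTM) := Config {
  cst : tst M;
  ctape : int -> tsym M;
  chead : int }.

Definition tm_step (M : DTM) (c c' : config M) : Prop :=
  ~~ halting M (cst M c) /\
  let: (p', g', d) := delta M (cst M c) (ctape M c (chead M c)) in
  [/\ cst M c' = p',
      chead M c' = (chead M c + dval d)%R &
      forall j, ctape M c' j = (if j == chead M c then g' else ctape M c j)].

Definition tm_reach (M : DTM) := clos_refl_trans_1n _ (tm_step M).

Definition init_config (M : DTM) (x : seq (tsym M)) : config M :=
  Config M (p0 M)
    (fun j : int => if ((0 < j)%R && (j <= (size x)%:Z)%R) then nth (blank M) x `|j - 1|%N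
                    else blank M)
    1%R.

Definition accepts (M : DTM) (x : seq (tsym M)) : Prop :=
  exists c, tm_reach M (init_config M x) c /\ cst M c = pY M.

Definition linear_bounded (M : DTM) : Prop :=
  forall x : seq (tsym M), all (Sigma M) x ->
  forall c, tm_reach M (init_config M x) c ->
    (0 <= chead M c)%R /\ (chead M c <= (size x)%:Z + 1)%R.

(* Port (i, p, g, true) = (p,g)_i^1 ; (i, p, g, false) = (p,g)_i^2.    *)
(* Local state (None, g) = (s,g) ; (Some p, g) = (p,g).                *)
Section SysM.
Variables (M : DTM) (x : seq (tsym M)).
Let n := size x.

Definition sport : finType := ('I_n.+2 * tst M * tsym M * bool)%type.
Definition sstate : finType := (option (tst M) * tsym M)%type.

Definition ddir (p : tst M) (g : tsym M) : dir := (delta M p g).2.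

Definition sis_port (a : sport) : bool :=
  let: (i, p, g, k) := a in
  ~~ halting M p &&
  (if nat_of_ord i == 0 then (if k then isR (ddir p g) else ~~ isR (ddir p g))
   else if nat_of_ord i == n.+1 then (if k then ~~ isR (ddir p g) else isR (ddir p g))
   else true).

Definition sInt (alpha : {set sport}) : Prop :=
  exists (i j : 'I_n.+2) (p : tst M) (g : tsym M),
    ~~ halting M p /\ (j%:Z = i%:Z + dval (ddir p g))%R /\
    alpha = [set (i, p, g, true); (j, p, g, false)].

Definition strans (i : 'I_n.+2) (q : sstate) (a : sport) (q' : sstate) : bool :=
  let: (j, p, g, k) := a in
  sis_port a && (j == i) && ~~ halting M p &&
  let: (p', g', _) := delta M p g in
  if k then (q == (Some p, g)) && (q' == (None, g'))
  else (q.1 == None) && (q' == (Some p', q.2)).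

Definition sinit (i : 'I_n.+2) : sstate :=
  (if nat_of_ord i == 1 then Some (p0 M) else None,
   if (0 < i) && (i <= n) then nth (blank M) x i.-1 else blank M).

Definition SysM : InteractionSystem :=
  {| comp := 'I_n.+2; port := sport; owner := fun a => a.1.1.1;
     is_port := sis_port; Int := sInt; lstate := fun _ => sstate;
     ltrans := strans; linit := sinit |}.
End SysM.

(* A linear bounded machine M on input x is simulated step by step by the
   interaction system Sys_M: component k holds the content of tape cell k and,
   when the head is on cell k, also the control state.  Writing [encode c] for
   the global state describing the configuration c, we show
   - every move of M from c is mirrored by a global step of Sys_M from
     [encode c] along the two-port interaction (p,g)_i^1, (p,g)_j^2, where i
     and j are the head positions before and after the move (linear
     boundedness guarantees that both are cells 0..n+1), and
   - conversely every global step from [encode c] is of this form, hence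
     leads to [encode c'] for the unique successor c' of c.
   A generic simulation lemma for reflexive-transitive closures turns these
   step correspondences into a correspondence between reachable
   configurations and reachable global states; since a local state
   (pY, g) occurs in [encode c] exactly when c is in state pY, the theorem
   follows. *)
From HB Require Import structures.
From mathcomp Require Import all_boot all_order all_algebra.
From mathcomp Require Import zify.
From Stdlib Require Import Relations.

Lemma rt1n_simulation {A B : Type} {RA : relation A} {RB : relation B}
    (S : A -> B -> Prop) (a0 : A) (b0 : B) :
  (forall a a' b, RA a a' -> S a b -> exists2 b', RB b b' & S a' b') ->
  S a0 b0 -> forall a, clos_refl_trans_1n A RA a0 a ->
  exists2 b, clos_refl_trans_1n B RB b0 b & S a b.
Proof.
move=> step S0 a reach; elim: reach b0 S0 => [a1 | a1 a2 a3 h12 _ IH] b0 S0.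
  by exists b0; first exact: rt1n_refl.
have [b1 hb01 S1] := step _ _ _ h12 S0.
have [b hb1 S3] := IH b1 S1.
by exists b => //; exact: Relation_Operators.rt1n_trans hb01 hb1.
Qed.

Lemma shift_neq (h : int) (d : dir) : (h + dval d == h)%R = false.
Proof. by case: d => /=; apply/negbTE; lia. Qed.

Section Simulation.
Local Set Implicit Arguments.
Variables (M : DTM) (x : seq (tsym M)).
Local Notation n := (size x).
Local Notation Sys := (SysM M x).
Local Notation cell := 'I_n.+2.

Lemma eqz_cell (k i : cell) : (Posz k == Posz i) = (k == i).
Proof. by rewrite eqz_nat. Qed.

Definition encode (c : config M) (k : cell) : sstate M :=
  (if Posz k == chead M c then Some (cst M c) else None, ctape M c k).

Definition represents (c : config M) (q : gstate Sys) : Prop :=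
  forall k, q k = encode c k.

Lemma represents_init : represents (init_config M x) (ginit Sys).
Proof.
move=> k; rewrite /ginit /= /sinit /encode /= ltz_nat lez_nat eqz_nat.
by congr pair; case: ifP => // /andP[k_gt0 _]; congr nth; lia.
Qed.

Lemma encode_step (c c' : config M) p' g' d (k : cell) :
  tm_step M c c' -> delta M (cst M c) (ctape M c (chead M c)) = (p', g', d) ->
  encode c' k =
    if Posz k == chead M c then (None, g')
    else if Posz k == (chead M c + dval d)%R then (Some p', ctape M c k)
    else encode c k.
Proof.
case=> _ + E; rewrite E /encode => -[-> -> ->].
case: eqP => [-> | _]; first by rewrite shift_neq.
by case: eqP.
Qed.

Definition next_config (c : config M) : config M :=
  let: (p', g', d) := delta M (cst M c) (ctape M c (chead M c)) in
  Config M p' (fun k => if k == chead M c then g' else ctape M c k)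
         (chead M c + dval d)%R.

Lemma next_config_step (c : config M) :
  ~~ halting M (cst M c) -> tm_step M c (next_config c).
Proof. by rewrite /next_config /tm_step => ->; case: delta => [[p' g'] d]. Qed.

Definition move (i j : cell) (p : tst M) (g : tsym M) : {set sport M x} :=
  [set (i, p, g, true); (j, p, g, false)].

Section Move.
Context {i j : cell} {p : tst M} {g : tsym M}.
Hypotheses (p_run : ~~ halting M p)
  (j_def : Posz j = (Posz i + dval (ddir M p g))%R).

(* Both ports of a move exist: a boundary cell only owns the ports whose head
   movement stays among the cells 0..n+1. *)
Lemma move_ports : sis_port M x (i, p, g, true) && sis_port M x (j, p, g, false).
Proof.
rewrite /sis_port p_run /=; have := ltn_ord i; have := ltn_ord j.
by case: (ddir M p g) j_def => /= ? ? ?; repeat case: eqP => /= ?; lia.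
Qed.

Lemma move_cells_neq : (j == i) = false.
Proof. by rewrite -eqz_cell j_def shift_neq. Qed.

Lemma gstep_moveP (q q' : gstate Sys) :
  gstep Sys (move i j p g) q q' <->
  [/\ strans M x i (q i) (i, p, g, true) (q' i),
      strans M x j (q j) (j, p, g, false) (q' j) &
      forall k, k != i -> k != j -> q k = q' k].
Proof.
have /andP[port_i port_j] := move_ports.
have ownerE b k0 (k : cell) :
    sis_port M x (k0, p, g, b) -> ((k0, p, g, b) \in A Sys k) = (k0 == k).
  by move=> port; rewrite /A inE [is_port _ _]port.
split=> [[_ step] | [send recv others]].
  split=> [| | k ki kj].
  - by apply: ((step i).1 (i, p, g, true)); rewrite ?in_set2 ?eqxx ?ownerE.
  - apply: ((step j).1 (j, p, g, false));
      by rewrite ?in_set2 ?eqxx ?orbT ?ownerE.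
  - apply: (step k).2 => a; rewrite in_set2 => /orP[] /eqP ->;
      by rewrite ownerE // eq_sym.
split; first by exists i, j, p, g.
move=> k; split=> [a | unmoved].
  by rewrite in_set2 => /orP[] /eqP ->; rewrite ownerE // => /eqP ik; subst k.
apply: others.
- move: (unmoved (i, p, g, true)).
  by rewrite in_set2 eqxx /= ownerE // eq_sym => /(_ isT).
- move: (unmoved (j, p, g, false)).
  by rewrite in_set2 eqxx orbT ownerE // eq_sym => /(_ isT).
Qed.

Lemma strans_send (k : cell) (l l' : sstate M) :
  strans M x i l (k, p, g, true) l' =
  (k == i) && (l == (Some p, g)) && (l' == (None, (delta M p g).1.2)).
Proof.
have /andP[port_i _] := move_ports.
rewrite /strans; case: eqP => [-> | _]; last by rewrite andbF.
by rewrite port_i p_run; case: delta => [[? ?] ?].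
Qed.

Lemma strans_recv (k : cell) (l l' : sstate M) :
  strans M x j l (k, p, g, false) l' =
  (k == j) && (l.1 == None) && (l' == (Some (delta M p g).1.1, l.2)).
Proof.
have /andP[_ port_j] := move_ports.
rewrite /strans; case: eqP => [-> | _]; last by rewrite andbF.
by rewrite port_j p_run; case: delta => [[? ?] ?].
Qed.

End Move.

Lemma simulate_tm_step (c c' : config M) (i j : cell) (q : gstate Sys) :
  tm_step M c c' -> Posz i = chead M c -> Posz j = chead M c' ->
  represents c q -> gstep Sys (move i j (cst M c) (ctape M c i)) q (encode c').
Proof.
move=> step head_i head_j rep; have [p_run _] := step.
case E: (delta M (cst M c) (ctape M c (chead M c))) => [[p' g'] d].
have enc' k := encode_step k step E.
have j_shift : Posz j = (Posz i + dval d)%R.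
  by rewrite head_j head_i; move: step => [_]; rewrite E => -[].
have delta_i : delta M (cst M c) (ctape M c i) = (p', g', d) by rewrite head_i.
have j_def : Posz j = (Posz i + dval (ddir M (cst M c) (ctape M c i)))%R.
  by rewrite /ddir delta_i.
have j_neq_i := move_cells_neq j_def.
apply/(gstep_moveP p_run j_def); split=> [| | k ki kj].
- by rewrite (strans_send p_run j_def) rep enc' /encode -head_i delta_i !eqxx.
- rewrite (strans_recv p_run j_def) rep enc' /encode -head_i -j_shift.
  by rewrite !eqz_cell j_neq_i delta_i !eqxx.
- by rewrite rep enc' -head_i -j_shift !eqz_cell (negbTE ki) (negbTE kj).
Qed.

Lemma simulate_gstep (c : config M) (q q' : gstate Sys) alpha :
  gstep Sys alpha q q' -> represents c q ->
  exists2 c', tm_step M c c' & represents c' q'.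
Proof.
move=> step rep; have [[i [j [p [g [p_run [j_def alpha_def]]]]]] _] := step.
move: step; rewrite alpha_def => /(gstep_moveP p_run j_def)[send recv others].
move: send recv.
rewrite (strans_send p_run j_def) (strans_recv p_run j_def) !eqxx /=.
move=> /andP[/eqP q_i /eqP q'_i] /andP[_ /eqP q'_j].
move: q_i; rewrite rep /encode; case: eqP => // head_i [cst_c tape_i].
have c_run : ~~ halting M (cst M c) by rewrite cst_c.
have next_step := @next_config_step c c_run.
exists (next_config c) => // k.
move: q'_i q'_j; rewrite /ddir in j_def.
case E: (delta M p g) j_def => [[p' g'] d] /= j_shift q'_i q'_j.
have delta_c : delta M (cst M c) (ctape M c (chead M c)) = (p', g', d).
  by rewrite cst_c -head_i tape_i.
rewrite (encode_step k next_step delta_c) -head_i -j_shift !eqz_cell.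
case: eqVneq => [-> // | ki]; case: eqVneq => [-> | kj].
  by rewrite q'_j rep.
by rewrite -others // rep.
Qed.

Lemma reachable_head_cell (c : config M) :
  linear_bounded M -> all (Sigma M) x -> tm_reach M (init_config M x) c ->
  exists i : cell, Posz i = chead M c.
Proof.
move=> bounded x_in reach; have [head_ge0 head_le] := bounded x x_in c reach.
have cell_lt : (`|chead M c| < n.+2)%N by lia.
by exists (Ordinal cell_lt) => /=; lia.
Qed.

Lemma reach_tm_sys (c : config M) :
  linear_bounded M -> all (Sigma M) x -> tm_reach M (init_config M x) c ->
  exists2 q, reachable Sys q & represents c q.
Proof.
move=> bounded x_in reach.
pose S c q := tm_reach M (init_config M x) c /\ represents c q.
suff [q ? []] : exists2 q, reachable Sys q & S c q by exists q.
apply: (rt1n_simulation S (init_config M x) (ginit Sys)) reach; last first.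
  by split; [exact: rt1n_refl | exact: represents_init].
move=> c1 c2 q step; rewrite /S => -[reach1 rep].
have reach2 : tm_reach M (init_config M x) c2.
  apply: clos_rt_rt1n; apply: rt_trans (rt_step _ _ _ _ step).
  exact: clos_rt1n_rt.
have [i head_i] := reachable_head_cell bounded x_in reach1.
have [j head_j] := reachable_head_cell bounded x_in reach2.
exists (encode c2); last by split=> // k.
eexists; exact: simulate_tm_step step head_i head_j rep.
Qed.

Lemma reach_sys_tm (q : gstate Sys) :
  reachable Sys q ->
  exists2 c, tm_reach M (init_config M x) c & represents c q.
Proof.
move=> reach.
apply: (rt1n_simulation (fun q c => represents c q) (ginit Sys) (init_config M x))
  reach; last exact: represents_init.
move=> q1 q2 c [alpha step] rep; exact: simulate_gstep step rep.
Qed.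

End Simulation.

Theorem mainTheorem1 (M : DTM) (x : seq (tsym M)) :
  linear_bounded M -> all (Sigma M) x -> 0 < size x ->
  accepts M x <->
  exists q : gstate (SysM M x),
    reachable (SysM M x) q /\
    exists (i : 'I_(size x).+2) (g : tsym M), q i = (Some (pY M), g).
Proof.
move=> bounded x_in _; split.
  move=> [c [reach accept]].
  have [q q_reach rep] := reach_tm_sys bounded x_in reach.
  have [i head_i] := reachable_head_cell bounded x_in reach.
  exists q; split => //; exists i, (ctape M c i).
  by rewrite rep /encode head_i eqxx accept.
move=> [q [q_reach [i [g q_i]]]].
have [c reach rep] := reach_sys_tm q_reach.
exists c; split => //.
by move: q_i; rewrite rep /encode; case: eqP => // _ [].
Qed.
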